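(* Let $X$ be a connected, non-bipartite strongly regular graph with parameters $(n,k,a,c)$, $k\ge3$, $k>c\ge1$, whose adjacency matrix has the integer eigenvalue $e=\lambda_1$, the larger root of $\lambda^2-(a-c)\lambda-(k-c)=0$. Suppose $c=e(e+1)$ and $e>a$. Then for every vertex $v$ of $X$, the closed neighbourhood $N=\{v\}\cup X_1(v)$ (the subgraph induced by $v$ together with its neighbours) is a star complement for $e$ in $X$.
   Context: A strongly regular graph with parameters $(n,k,a,c)$ has $n$ vertices, degree $k$, every two adjacent vertices have $a$ common neighbours and every two distinct non-adjacent vertices have $c$ common neighbours. If $e$ is an eigenvalue of $X$ with multiplicity $m$, a star complement for $e$ in $X$ is an induced subgraph on $n-m$ vertices that does not have $e$ as an eigenvalue. $X_1(v)$ denotes the set of neighbours of $v$. *)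

From mathcomp Require Import all_boot all_order all_algebra all_field.
Set Implicit Arguments. Unset Strict Implicit. Unset Printing Implicit Defensive.
Import Order.TTheory GRing.Theory Num.Theory.
Local Open Scope ring_scope.

Definition simple_graph n (adj : rel 'I_n) : Prop :=
  symmetric adj /\ irreflexive adj.

Definition nbhd n (adj : rel 'I_n) (v : 'I_n) : {set 'I_n} := [set w | adj v w].

Definition srg n (adj : rel 'I_n) (k a c : nat) : Prop :=
  simple_graph adj /\
  (forall v, #|nbhd adj v| = k) /\
  (forall x y, x != y -> adj x y -> #|nbhd adj x :&: nbhd adj y| = a) /\
  (forall x y, x != y -> ~~ adj x y -> #|nbhd adj x :&: nbhd adj y| = c).

Definition connected_graph n (adj : rel 'I_n) : Prop :=
  forall x y, connect adj x y.

Definition bipartite n (adj : rel 'I_n) : Prop :=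
  exists f : 'I_n -> bool, forall x y, adj x y -> f x != f y.

Definition adjmx n (adj : rel 'I_n) : 'M[algC]_n :=
  \matrix_(i, j) (adj i j)%:R.

Definition induced_adjmx n (adj : rel 'I_n) (S : {set 'I_n}) : 'M[algC]_#|S| :=
  \matrix_(i, j) (adj (enum_val i) (enum_val j))%:R.

(* multiplicity of the eigenvalue e of a (symmetric, hence diagonalizable)
   matrix: dimension of its eigenspace *)
Definition eig_mult m (A : 'M[algC]_m) (e : algC) : nat := \rank (eigenspace A e).

Definition star_complement n (adj : rel 'I_n) (e : algC) (S : {set 'I_n}) : Prop :=
  #|S| = (n - eig_mult (adjmx adj) e)%N /\ ~~ eigenvalue (induced_adjmx adj S) e.

From mathcomp Require Import all_boot all_order all_algebra all_field.
From mathcomp Require Import ring.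
Set Implicit Arguments. Unset Strict Implicit. Unset Printing Implicit Defensive.
Import Order.TTheory GRing.Theory Num.Theory.
Local Open Scope ring_scope.

(* Write r = e and s for the two roots of x^2 - (a - c) x - (k - c).  The
   multiplicity of r is the trace of the eigenprojection
   (A - s)(A - k) / ((r - s)(r - k)), namely k n (1 + s) / ((r - s)(r - k));
   when c = r (r + 1) the parameters satisfy k = r (r + 1 - s) and n = (r - s)^2,
   and this equals n - k - 1 = n - |N|.  For N = {v} u X_1(v), an eigenvector x
   of N for r satisfies ((r - a) r - k) x_v = 0 by the eigen-equations at v and
   at the neighbours of v; as (r - a) r - k = -c (r + 1) <> 0, x_v = 0, and x
   restricted to X_1(v), which induces an a-regular graph, is then an
   eigenvector for r > a, which forces x = 0. *)

Section EigenProjector.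
Variables (F : fieldType) (n : nat).

Lemma mxtrace_pid r : (r <= n)%N -> \tr (pid_mx r : 'M[F]_n) = r%:R.
Proof.
move=> le_rn; have <- : \sum_(i < r) (1 : F) = r%:R by rewrite sumr_const card_ord.
rewrite (big_ord_widen _ (fun=> 1) le_rn) big_mkcond /=.
by apply: eq_bigr => i _; rewrite mxE eqxx; case: ifP.
Qed.

Lemma mxtrace_idem (E : 'M[F]_n) : E *m E = E -> \tr E = (\rank E)%:R.
Proof.
move=> idE; have defE := mulmx_ebase E.
set L := col_ebase E in defE; set U := row_ebase E in defE; set P := pid_mx _ in defE.
have uL : L \in unitmx by apply: col_ebase_unit.
have uU : U \in unitmx by apply: row_ebase_unit.
have PP : P *m P = P by rewrite pid_mx_id // rank_leq_row.
have PULP : P *m (U *m L) *m P = P.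
  have := congr1 (fun X => invmx L *m X *m invmx U) idE; rewrite /= -defE.
  by rewrite -!mulmxA mulKmx // !mulmxA mulmxK // -!mulmxA mulKmx // !mulmxA mulmxK.
rewrite -[in LHS]defE mxtrace_mulC mulmxA mxtrace_mulC -{1}PP -mulmxA mxtrace_mulC.
by rewrite PULP mxtrace_pid // rank_leq_row.
Qed.

Lemma mulmx_sub_scalar (A : 'M[F]_n) x y :
  (A - x%:M) *m (A - y%:M) = A *m A - (x + y) *: A + (x * y)%:M.
Proof.
rewrite mulmxBl !mulmxBr mul_mx_scalar !mul_scalar_mx scale_scalar_mx scalerDl.
rewrite !opprD opprK !addrA; congr (_ + _); exact: addrAC.
Qed.

Lemma eigen_mulmx_sub m (K : 'M[F]_(m, n)) A r x :
  K *m A = r *: K -> K *m (A - x%:M) = (r - x) *: K.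
Proof. by move=> KA; rewrite mulmxBr KA mul_mx_scalar scalerBl. Qed.

(* [E / d] is then an idempotent with the same row space as the eigenspace. *)
Lemma eigenspace_rank_trace (A E : 'M[F]_n) r d : d != 0 ->
  E *m A = r *: E -> eigenspace A r *m E = d *: eigenspace A r ->
  (\rank (eigenspace A r))%:R = \tr E / d.
Proof.
move=> d0 EA KE; set K := eigenspace A r in KE *.
have sEK : (E <= K)%MS by apply/eigenspaceP.
have sKE : (K <= E)%MS.
  have -> : K = d^-1 *: (K *m E) by rewrite KE scalerA mulVf // scale1r.
  by rewrite scalemx_sub // submxMl.
have EE : E *m E = d *: E.
  by have [W defE] := submxP sEK; rewrite {1}defE -mulmxA KE -scalemxAr -defE.
have idE : (d^-1 *: E) *m (d^-1 *: E) = d^-1 *: E.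
  by rewrite -scalemxAl -scalemxAr EE !scalerA divfK.
rewrite mulrC -mxtraceZ mxtrace_idem // mxrank_scale_nz ?invr_eq0 //.
by congr (_%:R); apply/eqP; rewrite eqn_leq !mxrankS.
Qed.

End EigenProjector.

Lemma sumr_mem_card n (S : {set 'I_n}) : \sum_z ((z \in S)%:R : algC) = #|S|%:R.
Proof.
rewrite -sum1_card natr_sum [RHS]big_mkcond /=.
by apply: eq_bigr => z _; case: (z \in S).
Qed.

Lemma mul_const1_mx n :
  (const_mx 1 : 'M[algC]_n) *m const_mx 1 = n%:R *: const_mx 1 :> 'M_n.
Proof.
apply/matrixP => x y; rewrite !mxE mulr1 -[X in X%:R]card_ord -sum1_card natr_sum.
by apply: eq_bigr => z _; rewrite !mxE mulr1.
Qed.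

Definition closed_nbhd n (adj : rel 'I_n) (v : 'I_n) : {set 'I_n} := v |: nbhd adj v.

Section StronglyRegular.
Variables (n : nat) (adj : rel 'I_n) (k a c : nat).
Hypothesis srgX : srg adj k a c.
Local Notation A := (adjmx adj).
Local Notation J := (const_mx 1 : 'M[algC]_n).

Lemma adjmx_sqrE x y : (A *m A) x y = #|nbhd adj x :&: nbhd adj y|%:R.
Proof.
have [[adj_sym _] _] := srgX; rewrite !mxE -sumr_mem_card.
apply: eq_bigr => z _; rewrite !mxE !inE (adj_sym z y).
by case: (adj x z); case: (adj y z); rewrite ?mulr0 ?mulr1.
Qed.

Lemma adjmx_sqr :
  A *m A = (k%:R - c%:R) *: 1%:M + (a%:R - c%:R) *: A + c%:R *: J.
Proof.
have [[_ adj_irr] [deg [common_adj common_nadj]]] := srgX.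
apply/matrixP => x y; rewrite adjmx_sqrE !mxE.
have [<-|nxy] := eqVneq x y.
  by rewrite setIid deg adj_irr /= mulr1 mulr0 addr0 mulr1 subrK.
rewrite /= mulr0 add0r mulr1; case xy: (adj x y).
  by rewrite common_adj // mulr1 subrK.
by rewrite common_nadj ?xy // mulr0 add0r.
Qed.

Lemma adjmx_mulJ : A *m J = k%:R *: J.
Proof.
have [_ [deg _]] := srgX; apply/matrixP => x y.
rewrite !mxE mulr1 -(deg x) -sumr_mem_card.
by apply: eq_bigr => z _; rewrite !mxE mulr1 inE.
Qed.

Lemma mulJ_adjmx : J *m A = k%:R *: J.
Proof.
have [[adj_sym _] [deg _]] := srgX; apply/matrixP => x y.
rewrite !mxE mulr1 -(deg y) -sumr_mem_card.
by apply: eq_bigr => z _; rewrite !mxE mul1r inE adj_sym.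
Qed.

Lemma mxtrace_adjmx : \tr A = 0.
Proof. by have [[_ adj_irr] _] := srgX; apply: big1 => i _; rewrite mxE adj_irr. Qed.

Lemma card_closed_nbhd v : #|closed_nbhd adj v| = k.+1.
Proof.
have [[_ adj_irr] [deg _]] := srgX.
by rewrite cardsU1 deg inE adj_irr.
Qed.

Lemma srg_count (v : 'I_n) :
  k%:R ^+ 2 = k%:R - c%:R + (a%:R - c%:R) * k%:R + c%:R * n%:R :> algC.
Proof.
have := congr1 (fun M => (M *m J) v v) adjmx_sqr.
rewrite /= -mulmxA adjmx_mulJ -scalemxAr adjmx_mulJ scalerA !mulmxDl -!scalemxAl.
by rewrite mul1mx adjmx_mulJ mul_const1_mx !mxE !mulr1 expr2 => ->.
Qed.

Lemma srg_eig_mult (r s : algC) :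
  r + s = a%:R - c%:R -> r * s = c%:R - k%:R -> r != s -> r != k%:R ->
  (eig_mult A r)%:R = k%:R * n%:R * (1 + s) / ((r - s) * (r - k%:R)).
Proof.
move=> sum_rs prod_rs neq_rs neq_rk.
set E := (A - s%:M) *m (A - k%:R%:M).
have AsAr : (A - s%:M) *m (A - r%:M) = c%:R *: J.
  rewrite mulmx_sub_scalar adjmx_sqr [s + r]addrC sum_rs [s * r]mulrC prod_rs.
  by apply/matrixP => i j; rewrite !mxE -mulr_natr; ring.
have EA : E *m A = r *: E.
  apply/eqP; rewrite -subr_eq0 -mul_mx_scalar -mulmxBr -mulmxA.
  have -> : (A - k%:R%:M) *m (A - r%:M) = (A - r%:M) *m (A - k%:R%:M).
    by rewrite !mulmx_sub_scalar [k%:R + r]addrC [k%:R * r]mulrC.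
  by rewrite mulmxA AsAr -scalemxAl mulmxBr mulJ_adjmx mul_mx_scalar subrr scaler0.
have KE : eigenspace A r *m E = ((r - s) * (r - k%:R)) *: eigenspace A r.
  have KA : eigenspace A r *m A = r *: eigenspace A r by apply/eigenspaceP.
  by rewrite mulmxA !(eigen_mulmx_sub _ KA) -scalemxAl (eigen_mulmx_sub _ KA) scalerA.
have trA2 : \tr (A *m A) = k%:R * n%:R.
  have [_ [deg _]] := srgX.
  rewrite /mxtrace; under eq_bigr do rewrite adjmx_sqrE setIid deg.
  by rewrite sumr_const card_ord mulr_natr.
have trE : \tr E = k%:R * n%:R * (1 + s).
  rewrite /E mulmx_sub_scalar !mxtraceD trA2 raddfN /= mxtraceZ mxtrace_adjmx mxtrace_scalar.
  by rewrite -mulr_natr; ring.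
by rewrite /eig_mult (eigenspace_rank_trace _ EA KE) ?trE // mulf_neq0 // subr_eq0.
Qed.

End StronglyRegular.

(* An eigenvector of the adjacency matrix induced on [S], extended by zero to all vertices. *)
Definition induced_eigenfun n (adj : rel 'I_n) (S : {set 'I_n}) (r : algC)
    (h : 'I_n -> algC) : Prop :=
  (forall w, w \notin S -> h w = 0) /\
  (forall z, z \in S -> \sum_w h w * (adj w z)%:R = r * h z).

Lemma induced_eigenfun_eigenvalue n (adj : rel 'I_n) (S : {set 'I_n}) r :
  (forall h, induced_eigenfun adj S r h -> forall w, h w = 0) ->
  ~~ eigenvalue (induced_adjmx adj S) r.
Proof.
move=> only0; apply/eigenvalueP => -[u uA /rV0Pn[i ui]].
have Si := enum_valP i.
pose h z := if z \in S then u 0 (enum_rank_in Si z) else 0.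
have hE j : u 0 j = h (enum_val j) by rewrite /h enum_valP enum_valK_in.
suff: h (enum_val i) = 0 by rewrite -hE => /eqP; apply/negP.
apply: only0; split=> [w /negbTE wS | z zS]; first by rewrite /h wS.
have := congr1 (fun M : 'rV_#|S| => M 0 (enum_rank_in Si z)) uA.
rewrite !mxE /h zS => <-; apply/esym.
under eq_bigr => j _ do rewrite !mxE enum_rankK_in // hE.
rewrite -(big_enum_val (A := pred_of_set S) (fun w => h w * (adj w z)%:R)) /=.
rewrite big_mkcond /=.
by apply: eq_bigr => w _; rewrite /h; case: (w \in S); rewrite ?mul0r.
Qed.

Section ClosedNeighbourhood.
Variables (n : nat) (adj : rel 'I_n) (k a : nat) (v : 'I_n).
Hypotheses (adj_sym : symmetric adj) (adj_irr : irreflexive adj).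
Hypotheses (deg_v : #|nbhd adj v| = k)
  (common_v : forall w, adj v w -> #|nbhd adj v :&: nbhd adj w| = a).
Local Notation N := (closed_nbhd adj v).

Lemma sum_nbhd_supported (g : 'I_n -> algC) : (forall w, w \notin N -> g w = 0) ->
  \sum_z (adj v z)%:R * g z = \sum_(z | z != v) g z.
Proof.
move=> gN; rewrite (bigD1 v) //= adj_irr mul0r add0r; apply: eq_bigr => z zv.
case vz: (adj v z); first by rewrite mul1r.
by rewrite mul0r gN // !inE (negbTE zv) vz.
Qed.

Lemma sum_nbhd_eigen (g : 'I_n -> algC) : (forall w, w \notin N -> g w = 0) ->
  \sum_z (adj v z)%:R * \sum_w g w * (adj w z)%:R =
  k%:R * g v + a%:R * \sum_(w | w != v) g w.
Proof.
move=> gN; under eq_bigr do rewrite mulr_sumr; rewrite exchange_big /=.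
rewrite (bigD1 v) //= mulr_sumr; congr (_ + _).
- rewrite -deg_v -sumr_mem_card mulr_suml; apply: eq_bigr => z _.
  by rewrite inE; case: (adj v z); rewrite ?mulr1 ?mul1r ?mulr0 ?mul0r.
apply: eq_bigr => w wv; rewrite -[RHS]mulrC.
case vw: (adj v w); last first.
  by rewrite gN ?inE ?(negbTE wv) ?vw // mul0r big1 // => z _; rewrite mul0r mulr0.
rewrite -(common_v vw) -sumr_mem_card mulr_sumr; apply: eq_bigr => z _.
by rewrite !inE; case: (adj v z); case: (adj w z); rewrite /= ?mulr1 ?mul1r ?mulr0 ?mul0r.
Qed.

Lemma induced_eigenfun_center r h : induced_eigenfun adj N r h ->
  (r - a%:R) * r != k%:R -> h v = 0.
Proof.
move=> [hN hE] rk; set Sy := \sum_(w | w != v) h w.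
have at_v : Sy = r * h v.
  rewrite /Sy -hE ?setU11 // -(sum_nbhd_supported hN).
  by apply: eq_bigr => w _; rewrite adj_sym mulrC.
have around_v : r * Sy = k%:R * h v + a%:R * Sy.
  rewrite /Sy -(sum_nbhd_eigen hN) -(sum_nbhd_supported hN) mulr_sumr.
  apply: eq_bigr => z _; case vz: (adj v z); last by rewrite !mul0r mulr0.
  by rewrite hE ?inE ?vz ?orbT // !mul1r.
rewrite at_v in around_v.
have : ((r - a%:R) * r - k%:R) * h v = 0.
  have -> : ((r - a%:R) * r - k%:R) * h v =
    r * (r * h v) - (k%:R * h v + a%:R * (r * h v)) by ring.
  by rewrite around_v subrr.
by move/eqP; rewrite mulf_eq0 subr_eq0 (negbTE rk) => /eqP.
Qed.

(* On [N \ {v}] the restriction of [h] is an eigenfunction of an [a]-regular graph,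
   so its eigenvalue cannot exceed [a] in absolute value unless [h] vanishes. *)
Lemma induced_eigenfun_trivial r h : induced_eigenfun adj N r h ->
  a%:R < r -> h v = 0 -> forall w, h w = 0.
Proof.
move=> [hN hE] ar hv0; have r_gt0 : 0 < r by apply: le_lt_trans ar.
set T := \sum_(w | w != v) `|h w|.
have normN w : w \notin N -> `|h w| = 0 by move/hN ->; rewrite normr0.
have rT : r * T <= a%:R * T.
  have -> : r * T = \sum_z (adj v z)%:R * `|r * h z|.
    rewrite sum_nbhd_supported => [|w /hN ->]; last by rewrite mulr0 normr0.
    by rewrite mulr_sumr; apply: eq_bigr => z _; rewrite normrM gtr0_norm.
  have -> : a%:R * T = k%:R * `|h v| + a%:R * T by rewrite hv0 normr0 mulr0 add0r.
  rewrite -(sum_nbhd_eigen normN).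
  apply: ler_sum => z _; case vz: (adj v z); last by rewrite !mul0r.
  rewrite !mul1r -hE ?inE ?vz ?orbT //.
  apply: le_trans (ler_norm_sum _ _ _) _; apply: ler_sum => w _.
  by rewrite normrM normr_nat.
have T0 : T = 0.
  apply/eqP; rewrite eq_le sumr_ge0 ?andbT //.
  have : (r - a%:R) * T <= 0 by rewrite mulrBl subr_le0.
  by rewrite pmulr_rle0 // subr_gt0.
move=> w; have [->//|wv] := eqVneq w v.
by apply/normr0_eq0; apply: (psumr_eq0P (fun i _ => normr_ge0 (h i)) T0).
Qed.

Lemma closed_nbhd_not_eigenvalue r : a%:R < r -> (r - a%:R) * r != k%:R ->
  ~~ eigenvalue (induced_adjmx adj N) r.
Proof.
move=> ar rk; apply: induced_eigenfun_eigenvalue => h hN.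
exact: induced_eigenfun_trivial hN ar (induced_eigenfun_center hN rk).
Qed.

End ClosedNeighbourhood.

Lemma srg_mult_value (F : fieldType) (r s k c n : F) :
  c = r * (r + 1) -> r * s = c - k -> k ^+ 2 = k - c + (r + s) * k + c * n ->
  c != 0 -> r != s -> k * n * (1 + s) / ((r - s) * (r - k)) = n - k - 1.
Proof.
move=> c_r prod_rs count c0 neq_rs.
have k_r : k = r * (r + 1 - s) by rewrite mulrBr -c_r prod_rs opprB addrC subrK.
have n_rs : n = (r - s) ^+ 2.
  apply: (mulfI c0); have -> : c * n = k ^+ 2 - k + c - (r + s) * k by rewrite count; ring.
  by rewrite k_r c_r; ring.
have r0 : r != 0 by move: c0; rewrite c_r mulf_eq0 negb_or => /andP[].
rewrite n_rs k_r; field.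
have -> : r - r * (r + 1 - s) = - (r * (r - s)) by ring.
by rewrite oppr_eq0 mulf_neq0 // subr_eq0 neq_rs.
Qed.

Lemma closed_nbhd_star_complement n (adj : rel 'I_n) k a c (r s : algC) v :
  srg adj k a c -> r + s = a%:R - c%:R -> r * s = c%:R - k%:R ->
  c%:R = r * (r + 1) -> (0 < c)%N -> r != s -> a%:R < r ->
  star_complement adj r (closed_nbhd adj v).
Proof.
move=> srgX sum_rs prod_rs c_r c_gt0 neq_rs ar.
have r_gt0 : 0 < r by apply: le_lt_trans ar.
have k_rs : k%:R = r * (r + 1 - s) by rewrite mulrBr -c_r prod_rs opprB addrC subrK.
have neq_rk : r != k%:R.
  rewrite -subr_eq0; have -> : r - k%:R = - (r * (r - s)) by rewrite k_rs; ring.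
  by rewrite oppr_eq0 mulf_neq0 ?subr_eq0 // gt_eqF.
have gap : (r - a%:R) * r != k%:R.
  have a_rs : a%:R = r + s + c%:R by rewrite sum_rs subrK.
  rewrite -subr_eq0; have -> : (r - a%:R) * r - k%:R = - (c%:R * (r + 1)).
    by rewrite a_rs k_rs c_r; ring.
  by rewrite oppr_eq0 gt_eqF // mulr_gt0 ?ltr0n ?addr_gt0.
have [[adj_sym adj_irr] [deg [common _]]] := srgX.
have card_N := card_closed_nbhd srgX v.
have le_kn : (k.+1 <= n)%N by rewrite -card_N -[X in (_ <= X)%N]card_ord max_card.
split.
- have := srg_eig_mult srgX sum_rs prod_rs neq_rs neq_rk.
  have count := srg_count srgX v; rewrite -sum_rs in count.
  rewrite (srg_mult_value c_r prod_rs count) ?pnatr_eq0 -?lt0n //.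
  rewrite -addrA -opprD natr1 -natrB // => /eqP; rewrite eqr_nat => /eqP ->.
  by rewrite card_N subKn.
apply: (closed_nbhd_not_eigenvalue adj_sym adj_irr (deg v) _ ar gap) => w vw.
by apply: (common _ _ _ vw); apply: contraTneq vw => <-; rewrite adj_irr.
Qed.

Theorem theorem6p1 (n : nat) (adj : rel 'I_n) (k a c : nat) (e : int) :
  srg adj k a c ->
  connected_graph adj ->
  ~ bipartite adj ->
  (3 <= k)%N -> (c < k)%N -> (1 <= c)%N ->
  eigenvalue (adjmx adj) (e%:~R) ->
  e ^+ 2 - (a%:Z - c%:Z) * e - (k%:Z - c%:Z) = 0 ->
  (a%:Z - c%:Z) - e < e ->
  c%:Z = e * (e + 1) ->
  a%:Z < e ->
  forall v : 'I_n, star_complement adj (e%:~R) (v |: nbhd adj v).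
Proof.
move=> srgX _ _ _ _ c_gt0 _ eq_e lt_se c_e lt_ae v.
pose s : int := a%:Z - c%:Z - e.
have prod_es : e * s = c%:Z - k%:Z.
  by apply/eqP; rewrite -subr_eq0 -oppr_eq0 -eq_e; apply/eqP; rewrite /s; ring.
have nat_int m : ((m%:Z)%:~R : algC) = m%:R by rewrite pmulrn.
apply: (closed_nbhd_star_complement (s := s%:~R) _ srgX) => //.
- by rewrite /s !rmorphB /= !nat_int addrC subrK.
- by rewrite -rmorphM prod_es rmorphB /= !nat_int.
- by rewrite -nat_int c_e rmorphM rmorphD /= rmorph1.
- by rewrite eqr_int gt_eqF.
by rewrite -nat_int ltr_int.
Qed.
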